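(* Fix $\varepsilon\in\{1,-1\}$, $m\in\{1,2,5,7,8,10,11,13,14,16,17,19,22,23\}$, and a nonnegative integer $n$ such that $\delta_m(n)$ is squarefree. With $A=18(m+24n)-\varepsilon$, $B=4\varepsilon/9$, $D=-3$, $r=1/3+A^2$, the number $H(m,n)=\frac{1}{16}(2ABD+2A^2Dr+3r^2)$ is an integer.
   Context: Let $f_m(n)=62208n^2+(5184m-432\varepsilon)n+(108m^2-18\varepsilon m+1)$, let $i=1$ if $m$ is odd, $i=2$ if $m$ is even and $m\ne8,16$, and $i=4$ if $m\in\{8,16\}$, and let $\delta_m(n)=2^{1-i}(m+24n)f_m(n)$ (an integer), so that $2(m+24n)f_m(n)=2^i\delta_m(n)$. *)

From mathcomp Require Import all_boot all_order all_algebra.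
Set Implicit Arguments. Unset Strict Implicit. Unset Printing Implicit Defensive.
Import Order.TTheory GRing.Theory Num.Theory.
Local Open Scope ring_scope.

(* Large numerals are written factored (62208 = 256*243, 5184 = 72*72)
   since nat-based int literals overflow the stack.
   f_m(n) = 62208 n^2 + (5184 m - 432 eps) n + (108 m^2 - 18 eps m + 1) *)
Definition f_m (eps : int) (m n : nat) : int :=
  (256 * 243) * (n%:Z) ^+ 2 + ((72 * 72) * m%:Z - 432 * eps) * n%:Z
  + (108 * (m%:Z) ^+ 2 - 18 * eps * m%:Z + 1).

Definition i_m (m : nat) : nat :=
  if odd m then 1%N else if (m == 8%N) || (m == 16%N) then 4%N else 2%N.

(* delta_m(n) = 2^(1-i) (m+24n) f_m(n), i.e. the integer with
   2 (m+24n) f_m(n) = 2^i delta_m(n). *)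
Definition delta_m (eps : int) (m n : nat) : int :=
  ((2 * (m%:Z + 24 * n%:Z) * f_m eps m n) %/ (2 ^+ i_m m))%Z.

Definition squarefree (d : int) : Prop :=
  forall p : nat, prime p -> ~ ((p%:Z) ^+ 2 %| d)%Z.

Definition H_mn (eps : int) (m n : nat) : rat :=
  let A : rat := (18 * (m%:Z + 24 * n%:Z) - eps)%:~R in
  let B : rat := 4 * eps%:~R / 9 in
  let D : rat := -3 in
  let r : rat := 1 / 3 + A ^+ 2 in
  (2 * A * B * D + 2 * A ^+ 2 * D * r + 3 * r ^+ 2) / 16.

(* Expanding the definition gives H = (1 - 8 eps A - 9 A^4) / 48 for any eps and A.
   With A = 18 k - eps, k = m + 24 n, and eps^2 = 1 the numerator is 9 (1 - A^4) - 144 eps k,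
   and A is odd, so A^4 = 1 mod 16 and 48 divides the numerator. *)

From mathcomp Require Import all_boot all_order all_algebra.
From mathcomp Require Import ring zify.
Set Implicit Arguments.
Unset Strict Implicit.

Import GRing.Theory Num.Theory.
Local Open Scope ring_scope.

Lemma dvdz2_mul_succ (b : int) : (2 %| b * (b + 1))%Z.
Proof.
rewrite (divz_eq b 2); set q := (b %/ 2)%Z.
have [->|->] : (b %% 2 = 0 \/ b %% 2 = 1)%Z by lia.
- by apply/dvdzP; exists (q * (q * 2 + 1)); ring.
- by apply/dvdzP; exists ((q * 2 + 1) * (q + 1)); ring.
Qed.

Lemma dvdz16_odd_pow4_sub1 (a b : int) : a = 2 * b + 1 -> (16 %| a ^+ 4 - 1)%Z.
Proof.
move=> ->; have /dvdzP[c hc] := dvdz2_mul_succ b.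
apply/dvdzP; exists (4 * c ^+ 2 + c).
have -> : (2 * b + 1) ^+ 4 - 1 = 16 * (b * (b + 1)) ^+ 2 + 8 * (b * (b + 1)) by ring.
rewrite hc; ring.
Qed.

Definition A_mn (eps : int) (m n : nat) : int := 18 * (m%:Z + 24 * n%:Z) - eps.

Lemma H_mnE (eps : int) (m n : nat) :
  H_mn eps m n = (1 - 8 * eps * A_mn eps m n - 9 * A_mn eps m n ^+ 4)%:~R / 48.
Proof. by rewrite /H_mn /A_mn; field. Qed.

Theorem lemma3p1 (eps : int) (m n : nat) :
  (eps = 1 \/ eps = -1) ->
  m \in [:: 1; 2; 5; 7; 8; 10; 11; 13; 14; 16; 17; 19; 22; 23]%N ->
  squarefree (delta_m eps m n) ->
  exists z : int, H_mn eps m n = z%:~R.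
Proof.
move=> eps_unit _ _; set k : int := m%:Z + 24 * n%:Z.
have A_def : A_mn eps m n = 18 * k - eps by [].
have [b A_odd] : exists b, A_mn eps m n = 2 * b + 1.
  by rewrite A_def; case: eps_unit => ->; [exists (9 * k - 1) | exists (9 * k)]; ring.
have /dvdzP[q hq] := dvdz16_odd_pow4_sub1 A_odd.
exists (- 3 * q - 3 * eps * k); rewrite H_mnE.
have -> : 1 - 8 * eps * A_mn eps m n - 9 * A_mn eps m n ^+ 4
          = 48 * (- 3 * q - 3 * eps * k).
  have -> : A_mn eps m n ^+ 4 = 16 * q + 1 by rewrite -[LHS](subrK 1) hq; ring.
  by rewrite A_def; case: eps_unit => ->; ring.
by field.
Qed.
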